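(* Let $S$ be a numerical semigroup with $\rho=qm-c$, and let $G=G(S)$ with weight map $\mathrm{wt}(\{x,y\})=x+y$ and set of weak edges $E_0(G)$. Then $\rho\ge|\mathrm{wt}(E_0(G))|$.
   Context: A numerical semigroup is a subset $S\subseteq\mathbb N$ containing $0$, closed under addition, with finite complement; $S^*=S\setminus\{0\}$, $m=\min S^*$, $c=\max(\mathbb Z\setminus S)+1$, $q=\lceil c/m\rceil$, $\rho=qm-c$. $X=\{s\in S^*: s-m\notin S\}$. For $x\in S$, $\delta(x)$ is the unique integer with $x+\delta(x)m\in[c,c+m-1]$. The graph $G(S)$ has edge set all subsets $\{x,y\}\subseteq X$ ($x=y$ allowed) with $x+y\in X$. An edge $\{x,y\}$ is weak if $\delta(x)+\delta(y)=q-1$; $E_0(G)$ is the set of weak edges. *)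

From mathcomp Require Import all_boot all_order all_algebra.
Set Implicit Arguments. Unset Strict Implicit. Unset Printing Implicit Defensive.
Import Order.TTheory GRing.Theory Num.Theory.

Definition numerical_semigroup (S : pred nat) : Prop :=
  [/\ 0 \in S,
      (forall a b, a \in S -> b \in S -> a + b \in S)
    & exists N, forall n, N <= n -> n \in S].

Definition is_multiplicity (S : pred nat) (m : nat) : Prop :=
  [/\ 0 < m, m \in S & forall s, 0 < s -> s \in S -> m <= s].

(* c = max (Z \ S) + 1 (the conductor): every integer >= c lies in S and
   c - 1 does not (c = 0 means Z \ S consists of the negative integers). *)
Definition is_conductor (S : pred nat) (c : nat) : Prop :=
  (forall n, c <= n -> n \in S) /\ (c = 0 \/ c.-1 \notin S).

(* q = ceil(c/m), rho = q m - c *)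
Definition qq (m c : nat) : nat := (c + m.-1) %/ m.
Definition rho (m c : nat) : nat := qq m c * m - c.

(* X = { s in S^* : s - m notin S }  (s - m is an integer; negative ones are
   never in S) *)
Definition inX (S : pred nat) (m : nat) (s : nat) : bool :=
  [&& 0 < s, s \in S & (s < m) || (s - m \notin S)].

Definition is_delta (m c x : nat) (d : int) : Prop :=
  (c%:Z <= x%:Z + d * m%:Z)%R /\ (x%:Z + d * m%:Z <= c%:Z + m%:Z - 1)%R.

(* {x,y} is an edge of G(S): x, y in X (x = y allowed) and x + y in X. *)
Definition is_edge (S : pred nat) (m x y : nat) : Prop :=
  [/\ inX S m x, inX S m y & inX S m (x + y)].

Definition is_weak_edge (S : pred nat) (m c x y : nat) : Prop :=
  is_edge S m x y /\
  exists dx dy : int, [/\ is_delta m c x dx, is_delta m c y dy &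
                        (dx + dy = (qq m c)%:Z - 1)%R].

Definition weak_weights (S : pred nat) (m c : nat) (w : nat) : Prop :=
  exists x y, is_weak_edge S m c x y /\ w = x + y.

From mathcomp Require Import all_boot all_order all_algebra.
From mathcomp Require Import zify.
Set Implicit Arguments. Unset Strict Implicit.
Import GRing.Theory Num.Theory.

(* Every element s of X has s - m outside S, hence s - m < c, so all weights
   of edges lie below c + m.  For a weak edge {x, y}, adding the two defining
   inequalities x + delta(x) m >= c and y + delta(y) m >= c gives
   x + y + (q - 1) m >= 2 c, i.e. x + y >= c + m - rho.  The weights of weak
   edges thus lie in a window of rho consecutive integers. *)

Lemma leq_qqM (m c : nat) : 0 < m -> c <= qq m c * m.
Proof.
move=> m_gt0; have := divn_eq (c + m.-1) m; have := ltn_pmod (c + m.-1) m_gt0.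
rewrite /qq; lia.
Qed.

Lemma inX_ltn_conductor (S : pred nat) (m c s : nat) :
  (forall n, c <= n -> n \in S) -> inX S m s -> s < c + m.
Proof.
move=> cS /and3P [_ _ /orP [s_lt_m | sm_notin_S]]; first lia.
case: (leqP m s) => [m_le_s | ]; last lia.
case: (leqP c (s - m)) => [c_le_sm | ]; last lia.
by rewrite cS in sm_notin_S.
Qed.

Lemma weak_edge_weight_lower_bound (S : pred nat) (m c x y : nat) :
  0 < m -> is_weak_edge S m c x y -> c + m <= x + y + rho m c.
Proof.
move=> m_gt0 [_ [dx [dy [[cx _] [cy _] sum_delta]]]].
have delta_sum_mul : (dx * m%:Z + dy * m%:Z = ((qq m c)%:Z - 1) * m%:Z)%R.
  by rewrite -mulrDl sum_delta.
have two_c_le : (2 * c%:Z <= (x + y)%:Z + ((qq m c)%:Z - 1) * m%:Z)%R by lia.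
move: (leq_qqM c m_gt0) two_c_le; rewrite /rho; set q := qq m c; lia.
Qed.

Lemma weak_weight_window (S : pred nat) (m c w : nat) :
  is_multiplicity S m -> is_conductor S c ->
  weak_weights S m c w -> w < c + m <= w + rho m c.
Proof.
move=> [m_gt0 _ _] [cS _] [x [y [weak ->]]].
have [[_ _ Xxy] _] := weak.
by rewrite (inX_ltn_conductor cS Xxy) (weak_edge_weight_lower_bound m_gt0 weak).
Qed.

Lemma window_injection (P : nat -> Prop) (b n : nat) :
  (forall w, P w -> w < b <= w + n) ->
  exists f : nat -> nat,
    (forall w, P w -> f w < n) /\
    (forall w1 w2, P w1 -> P w2 -> f w1 = f w2 -> w1 = w2).
Proof.
move=> window; exists (fun w => w + n - b); split.
  by move=> w /window; lia.
by move=> w1 w2 /window ? /window ?; lia.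
Qed.

Theorem corollary3p21 (Sg : pred nat) (m c : nat) :
  numerical_semigroup Sg -> is_multiplicity Sg m -> is_conductor Sg c ->
  exists f : nat -> nat,
    (forall w, weak_weights Sg m c w -> f w < rho m c) /\
    (forall w1 w2, weak_weights Sg m c w1 -> weak_weights Sg m c w2 ->
       f w1 = f w2 -> w1 = w2).
Proof.
move=> _ mult cond; apply: (@window_injection _ (c + m)) => w.
exact: weak_weight_window.
Qed.
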